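(* Let $\Gamma=(V,E)$ be a strongly connected digraph with diameter $D\ge 2$. Let $X=\{x_1,\ldots,x_r\}\subset V$ with $r\ge 2$ be such that all vertices of $X$ have the same set of in-neighbors, say $Y=\Gamma^-(x_i)$ for $i=1,\ldots,r$, and let $Z=\Gamma^+(X)$. Let $\Gamma'$ be a digraph obtained from $\Gamma$ by replacing the set of arcs $e(X,Z)$ by another set of arcs $e'(X,Z)$ (all other arcs unchanged) such that: (i) $e'(Y,X)\cap e'(X,Z)=e(Y,X)\cap e(X,Z)$, where $e'(Y,X)$ denotes the set of arcs from $Y$ to $X$ in $\Gamma'$; (ii) considering the arcs that are not loops, every vertex of $X$ has some out-going arc in $\Gamma'$ to a vertex of $Z$, and every vertex of $Z$ has some in-going arc in $\Gamma'$ from a vertex of $X$. Assume moreover that every vertex of $Z$ has the same number of in-going arcs in $\Gamma'$ as in $\Gamma$, i.e. $|\Gamma'^-(v)|=|\Gamma^-(v)|$ for every $v\in Z$. Then $\Gamma$ and $\Gamma'$ are cospectral, i.e. their adjacency matrices have the same characteristic polynomial.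
   Context: For a vertex $v$, $\Gamma^-(v)$, $\Gamma'^-(v)$ denote the sets of in-neighbors of $v$ in $\Gamma$, $\Gamma'$ respectively, and $\Gamma^+(v)$ the out-neighbors; $\Gamma^+(U)$ is the set of vertices adjacent from some vertex of $U$. For $X,Y\subset V$, $e(X,Y)$ denotes the set of arcs from $X$ to $Y$ in $\Gamma$ ($e'(X,Y)$ in $\Gamma'$). A loop is an arc from a vertex to itself. The adjacency matrix $A=(a_{uv})$ has $a_{uv}=1$ if $(u,v)$ is an arc and $0$ otherwise. *)

From mathcomp Require Import all_boot all_order all_algebra.
Set Implicit Arguments. Unset Strict Implicit. Unset Printing Implicit Defensive.
Import GRing.Theory.

(* A digraph on vertex set 'I_n is an arc relation E : rel 'I_n
   (E u v = true iff (u,v) is an arc; loops allowed). *)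
Section Digraph.
Variable n : nat.
Implicit Types (E : rel 'I_n) (A B : {set 'I_n}).

Fixpoint within E (k : nat) (u v : 'I_n) : bool :=
  (u == v) || (if k is k'.+1 then [exists w, E u w && within E k' w v] else false).

Definition strongly_connected E := forall u v : 'I_n, connect E u v.

(* distance: least k with a walk of length <= k (walks of length < n suffice
   in a strongly connected digraph). *)
Definition dist E (u v : 'I_n) : nat := find (fun k => within E k u v) (iota 0 n).

Definition diameter E : nat := \max_(u < n) \max_(v < n) dist E u v.

Definition in_nbrs E (v : 'I_n) : {set 'I_n} := [set u | E u v].
Definition out_nbrs_set E A : {set 'I_n} := [set z | [exists x in A, E x z]].

Definition arcs E A B : {set 'I_n * 'I_n} :=
  [set a | (a.1 \in A) && (a.2 \in B) && E a.1 a.2].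

Definition adj E : 'M[int]_n := \matrix_(u < n, v < n) ((E u v)%:R)%R.
End Digraph.

From mathcomp Require Import all_boot all_order all_algebra all_fingroup.
Set Implicit Arguments. Unset Strict Implicit. Unset Printing Implicit Defensive.
Import GRing.Theory.

(* Since all vertices of X have the in-neighbourhood Y, the columns of A = adj E
   indexed by X coincide, and (i) together with the in-degree condition forces
   A' = adj E' to have the same X-columns as A. Outside the rows of X the two
   matrices agree, and on the rows of X they have the same column sums.
   Conjugating by I + e_{x1} 1_{X \ x1}^T (x1 in X) replaces row x1 by the sum
   of the rows of X and subtracts column x1 from the other X-columns: both
   conjugates then have zero columns on X \ x1 and agree on all other rows,
   which forces equal characteristic polynomials. *)

Local Open Scope ring_scope.

Section CharPoly.
Variables (R : comNzRingType) (n : nat).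
Implicit Types (B M L K : 'M[R]_n) (S : {set 'I_n}).

Lemma char_poly_conj L K M : L *m K = 1%:M -> char_poly (L *m M *m K) = char_poly M.
Proof.
move=> LK; rewrite /char_poly /char_poly_mx !map_mxM.
set Lp := map_mx _ L; set Kp := map_mx _ K.
have LKp : Lp *m Kp = 1%:M by rewrite -map_mxM LK map_mx1.
have XE : ('X%:M : 'M[{poly R}]_n) = Lp *m 'X%:M *m Kp.
  by rewrite mul_mx_scalar -scalemxAl LKp scalemx1.
rewrite {1}XE -mulmxBl -mulmxBr !det_mulmx mulrAC -det_mulmx LKp det1.
by rewrite mul1r.
Qed.

(* In the Leibniz expansion, a permutation moving some s in S meets a zero
   off-diagonal entry in column s; the others only see rows outside S or
   diagonal entries of S, which agree. *)
Lemma char_poly_eq_zero_cols S B B' :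
  (forall i s, s \in S -> B i s = 0) ->
  (forall i s, s \in S -> B' i s = 0) ->
  (forall i k, i \notin S -> B i k = B' i k) ->
  char_poly B = char_poly B'.
Proof.
move=> B0 B'0 BB'; rewrite /char_poly /determinant; apply: eq_bigr => s _.
congr (_ * _).
have [fix_s|] := boolP [forall x in S, s x == x].
  apply: eq_bigr => i _; rewrite !mxE.
  have [iS|iS] := boolP (i \in S); last by rewrite BB'.
  by move/forall_inP: fix_s => /(_ i iS)/eqP ->; rewrite B0 // B'0.
rewrite negb_forall_in => /exists_inP [x xS sx].
set j := (s^-1)%g x.
have sj : s j = x by rewrite /j permKV.
have jx : j != x by apply: contraNneq sx => e; rewrite -{2}sj e.
rewrite (bigD1 j) //= [in RHS](bigD1 j) //= !mxE sj (negbTE jx) B0 // B'0 //.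
by rewrite !subrr !mul0r.
Qed.

End CharPoly.

Section Shear.
Variables (R : comNzRingType) (n : nat) (x1 : 'I_n) (S : {set 'I_n}).
Implicit Type M : 'M[R]_n.

Definition shear_mx : 'M[R]_n := \matrix_(i, j) ((i == x1) && (j \in S))%:R.

Lemma mul_shear_mx M i k : (shear_mx *m M) i k = (i == x1)%:R * \sum_(j in S) M j k.
Proof.
rewrite !mxE big_distrr /= [RHS]big_mkcond; apply: eq_bigr => j _.
by rewrite mxE; case: (i == x1); case: (j \in S); rewrite /= ?mul1r ?mul0r.
Qed.

Lemma mul_mx_shear M i k : (M *m shear_mx) i k = (k \in S)%:R * M i x1.
Proof.
rewrite !mxE (bigD1 x1) //= big1 ?addr0; first by rewrite mxE eqxx mulrC.
by move=> j /negbTE jx; rewrite mxE jx mulr0.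
Qed.

Let mxE_add M M' i k : (M + M') i k = M i k + M' i k. Proof. by rewrite mxE. Qed.
Let mxE_opp M i k : (- M) i k = - M i k. Proof. by rewrite mxE. Qed.

Lemma shear_conjE M i k :
  ((1%:M + shear_mx) *m M *m (1%:M - shear_mx)) i k =
  M i k + (i == x1)%:R * \sum_(j in S) M j k
  - (k \in S)%:R * (M i x1 + (i == x1)%:R * \sum_(j in S) M j x1).
Proof.
rewrite mulmxDl mul1mx mulmxBr mulmx1 mulmxDl.
rewrite !mxE_add !mxE_opp !mxE_add.
by rewrite mul_shear_mx !mul_mx_shear mul_shear_mx mulrDr.
Qed.

Hypothesis x1S : x1 \notin S.

Lemma shear_mx_sqr : shear_mx *m shear_mx = 0.
Proof.
by apply/matrixP => i k; rewrite mul_mx_shear !mxE (negbTE x1S) andbF mulr0.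
Qed.

Lemma shear_mx_inv : (1%:M + shear_mx) *m (1%:M - shear_mx) = 1%:M.
Proof. by rewrite mulmxDl mul1mx mulmxBr mulmx1 shear_mx_sqr subr0 addrNK. Qed.

End Shear.

Lemma char_poly_eq_equal_cols (R : comNzRingType) n (A A' : 'M[R]_n)
    (X : {set 'I_n}) x1 :
  x1 \in X ->
  (forall u x, x \in X -> A u x = A u x1) ->
  (forall u x, x \in X -> A' u x = A u x) ->
  (forall u v, u \notin X -> A' u v = A u v) ->
  (forall v, \sum_(x in X) A x v = \sum_(x in X) A' x v) ->
  char_poly A = char_poly A'.
Proof.
move=> x1X Acol A'col A'row A'sum.
set S := X :\ x1.
have x1S : x1 \notin S by rewrite !inE eqxx.
have SX s : s \in S -> s \in X by rewrite !inE => /andP[].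
have A'col1 u x : x \in X -> A' u x = A' u x1 by move=> xX; rewrite !A'col // Acol.
have sumX (M : 'M[R]_n) k : M x1 k + \sum_(j in S) M j k = \sum_(j in X) M j k.
  by rewrite [RHS](big_setD1 x1 x1X).
rewrite -(char_poly_conj A (shear_mx_inv R x1S)).
rewrite -(char_poly_conj A' (shear_mx_inv R x1S)).
apply: (char_poly_eq_zero_cols (S := S)) => [i s sS|i s sS|i k iS].
- rewrite shear_conjE sS mul1r Acol ?SX //.
  by rewrite (eq_bigr (fun j => A j x1)) ?subrr // => j _; apply: Acol; apply: SX.
- rewrite shear_conjE sS mul1r A'col1 ?SX //.
  by rewrite (eq_bigr (fun j => A' j x1)) ?subrr // => j _; apply: A'col1; apply: SX.
rewrite !shear_conjE; have [->|ix1] := eqVneq i x1.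
  by rewrite !mul1r !sumX !A'sum.
have iX : i \notin X by rewrite !inE ix1 /= in iS.
by rewrite !mul0r !addr0 !A'row.
Qed.

Lemma sum_adj_col n (E : rel 'I_n) (X : {set 'I_n}) v :
  \sum_(x in X) adj E x v = #|in_nbrs E v :&: X|%:R.
Proof.
rewrite -sum1_card natr_sum [LHS]big_mkcond [RHS]big_mkcond /=.
apply: eq_bigr => x _; rewrite !mxE !inE andbC.
by case: (x \in X); case: (E x v).
Qed.

Local Close Scope ring_scope.

Section Rewiring.
Variables (n : nat) (E E' : rel 'I_n) (X Y Z : {set 'I_n}).

Hypothesis in_nbrs_X : forall x, x \in X -> in_nbrs E x = Y.
Hypothesis rewired_outside : forall u v, ~~ ((u \in X) && (v \in Z)) -> E' u v = E u v.
Hypothesis rewired_YX : arcs E' Y X :&: arcs E' X Z = arcs E Y X :&: arcs E X Z.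
Hypothesis rewired_in_deg : forall v, v \in Z -> #|in_nbrs E' v| = #|in_nbrs E v|.

Lemma arc_to_X u x : x \in X -> E u x = (u \in Y).
Proof. by move=> xX; rewrite -(in_nbrs_X xX) inE. Qed.

Lemma rewired_arc_from_out u v : u \notin X -> E' u v = E u v.
Proof. by move=> uX; apply: rewired_outside; rewrite (negbTE uX). Qed.

Lemma rewired_arc_YX w x : x \in X -> w \in Y -> E' w x = E w x.
Proof.
move=> xX wY; have [wX|wX] := boolP (w \in X); last exact: rewired_arc_from_out.
have [xZ|xZ] := boolP (x \in Z); last by apply: rewired_outside; rewrite (negbTE xZ) andbF.
move/setP: rewired_YX => /(_ (w, x)); rewrite !inE /= wY wX xX xZ /=.
by rewrite !andbb.
Qed.

(* The in-neighbourhood of x can only grow (it contains Y), and for x in Z its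
   size is preserved. *)
Lemma rewired_in_nbrs_X x : x \in X -> in_nbrs E' x = in_nbrs E x.
Proof.
move=> xX; have [xZ|xZ] := boolP (x \in Z); last first.
  by apply/setP => u; rewrite !inE rewired_outside // (negbTE xZ) andbF.
have sub : in_nbrs E x \subset in_nbrs E' x.
  apply/subsetP => w; rewrite !inE => Ewx.
  by rewrite rewired_arc_YX // -(arc_to_X w xX).
by apply/esym/eqP; rewrite eqEcard sub rewired_in_deg ?leqnn.
Qed.

Lemma rewired_arc_to_X u x : x \in X -> E' u x = E u x.
Proof. by move=> /rewired_in_nbrs_X/setP/(_ u); rewrite !inE. Qed.

Lemma rewired_card_in_nbrs_X v : #|in_nbrs E' v :&: X| = #|in_nbrs E v :&: X|.
Proof.
have [vZ|vZ] := boolP (v \in Z); last first.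
  by congr #|_ :&: X|; apply/setP => u; rewrite !inE rewired_outside // (negbTE vZ) andbF.
have eD : in_nbrs E' v :\: X = in_nbrs E v :\: X.
  by apply/setP => w; rewrite !inE; case: (boolP (w \in X)) => //= wX; rewrite rewired_arc_from_out.
apply: (@addIn #|in_nbrs E v :\: X|); rewrite -{1}eD !cardsID.
exact: rewired_in_deg.
Qed.

End Rewiring.

Theorem mainTheorem4 (n : nat) (E E' : rel 'I_n) (X Y : {set 'I_n}) :
  strongly_connected E ->
  2 <= diameter E ->
  2 <= #|X| ->
  (forall x, x \in X -> in_nbrs E x = Y) ->
  let Z := out_nbrs_set E X in
  (* all arcs outside e(X,Z) are unchanged *)
  (forall u v, ~~ ((u \in X) && (v \in Z)) -> E' u v = E u v) ->
  (* (i) *)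
  arcs E' Y X :&: arcs E' X Z = arcs E Y X :&: arcs E X Z ->
  (* (ii) *)
  (forall x, x \in X -> exists2 z, z \in Z & (z != x) && E' x z) ->
  (forall z, z \in Z -> exists2 x, x \in X & (x != z) && E' x z) ->
  (forall v, v \in Z -> #|in_nbrs E' v| = #|in_nbrs E v|) ->
  char_poly (adj E) = char_poly (adj E').
Proof.
move=> _ _ cardX inX Z outside YX _ _ in_deg.
have [x1 x1X] : exists x1, x1 \in X.
  by apply/set0Pn; rewrite -card_gt0; apply: leq_trans cardX.
apply: (char_poly_eq_equal_cols x1X) => [u x xX|u x xX|u v uX|v].
- by rewrite !mxE !(arc_to_X inX).
- by rewrite !mxE (rewired_arc_to_X inX outside YX in_deg u xX).
- by rewrite !mxE (rewired_arc_from_out outside).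
by rewrite !sum_adj_col (rewired_card_in_nbrs_X outside in_deg).
Qed.
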